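(* Let $G$ be a finite simple graph, $e$ an edge of $G$, $G' = G - e$, and $c$ an acyclic edge coloring of $G'$. Let $u,i,j,a,b$ be vertices with $ui, uj \in E(G')$ and $ab \in E(G)$, and let $\alpha \neq \beta$ be colors with $\{\alpha,\beta\} \cap \{c(u,i),c(u,j)\} \neq \emptyset$ and $\{i,j\} \cap \{a,b\} = \emptyset$. Suppose that, with respect to $c$, there exists an $(\alpha,\beta,ab)$-critical path in $G'$ passing through the vertex $u$. Let $c'$ be the coloring of $G'$ obtained from $c$ by exchanging the colors of $ui$ and $uj$ (i.e. $c'(u,i)=c(u,j)$, $c'(u,j)=c(u,i)$, and $c'(f)=c(f)$ for all other edges $f$), and suppose $c'$ is a proper edge coloring. Then with respect to $c'$ there is no $(\alpha,\beta,ab)$-critical path in $G'$.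
   Context: An edge coloring is proper if adjacent edges get different colors, and acyclic if it is proper and there is no cycle whose edges use only two colors. An $(\alpha,\beta)$-maximal bichromatic path is a path whose edges are colored alternately $\alpha$ and $\beta$ and which cannot be extended at either end by an edge of color $\alpha$ or $\beta$. For vertices $a,b$, an $(\alpha,\beta,ab)$-critical path (with respect to a given coloring of $G'$) is an $(\alpha,\beta)$-maximal bichromatic path in $G'$ that starts at $a$ with an edge colored $\alpha$ and ends at $b$ with an edge colored $\alpha$. *)

From mathcomp Require Import all_boot.
Set Implicit Arguments. Unset Strict Implicit. Unset Printing Implicit Defensive.

Definition simple_graph (T : finType) (adj : rel T) : Prop :=
  symmetric adj /\ irreflexive adj.

Definition del_edge (T : finType) (adj : rel T) (x y : T) : rel T :=
  fun v w => adj v w && ([set v; w] != [set x; y]).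

(* An edge coloring assigns a color (a nat) to each edge {v,w}, encoded
   as the 2-element set [set v; w]; only values on edges matter. *)
Definition ecoloring (T : finType) := {set T} -> nat.

Definition proper_ecoloring (T : finType) (adj : rel T) (c : ecoloring T) : Prop :=
  forall v w1 w2, adj v w1 -> adj v w2 -> w1 != w2 ->
    c [set v; w1] != c [set v; w2].

(* A cycle: distinct vertices s_0,...,s_{k-1}, k >= 3, consecutive ones
   (cyclically) adjacent.  Its edges are zip s (rot 1 s). *)
Definition graph_cycle (T : finType) (adj : rel T) (s : seq T) : Prop :=
  3 <= size s /\ uniq s /\ cycle adj s.

Definition acyclic_ecoloring (T : finType) (adj : rel T) (c : ecoloring T) : Prop :=
  proper_ecoloring adj c /\
  forall (s : seq T) (al be : nat), graph_cycle adj s ->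
    ~ all (fun p : T * T => c [set p.1; p.2] \in [:: al; be]) (zip s (rot 1 s)).

(* (al,be,ab)-critical path: the path a :: q (distinct vertices, consecutive
   ones adjacent, at least one edge) from a to b whose k-th edge
   (0-indexed) has color al for even k and be for odd k, whose first and
   last edges have color al, and which is maximal: at each end, the only
   incident edge of color al or be is the path edge at that end. *)
Definition critical_path (T : finType) (adj : rel T) (c : ecoloring T)
    (al be : nat) (a b : T) (q : seq T) : Prop :=
  [/\ q != [::], uniq (a :: q), path adj a q & last a q = b] /\
  [/\ (forall k, k < size q ->
         c [set nth a (a :: q) k; nth a q k] = if odd k then be else al),
      c [set a; head a q] = al,
      c [set nth a (a :: q) (size q).-1; b] = al,
      (forall w, adj a w -> c [set a; w] \in [:: al; be] -> w = head a q) &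
      (forall w, adj b w -> c [set b; w] \in [:: al; be] ->
         w = nth a (a :: q) (size q).-1)].

Definition swap_colors (T : finType) (c : ecoloring T) (u i j : T) : ecoloring T :=
  fun E => if E == [set u; i] then c [set u; j]
           else if E == [set u; j] then c [set u; i]
           else c E.

From mathcomp Require Import all_boot.
Set Implicit Arguments. Unset Strict Implicit. Unset Printing Implicit Defensive.

(* For a proper coloring the al/be-colored edges form a graph of maximum degree
   two, in which a critical path P is a whole component.  If c(ui) is al or be
   then i lies on P, and the properness of c' forbids c(uj) to be al or be and
   j to lie on P, since every interior vertex of P sees both colors.  So for c'
   the edge ui leaves that subgraph, cutting P into a part containing a and a
   part containing b, while the new edge uj only joins u to vertices off P:
   a and b end up in different al/be components, and no critical path for c'
   joins them. *)

Definition bichromatic (T : finType) (E : rel T) (c : ecoloring T) (al be : nat) : rel T :=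
  [rel v w | E v w && (c [set v; w] \in [:: al; be])].

Lemma bichromatic_sym (T : finType) (E : rel T) c al be :
  symmetric E -> symmetric (bichromatic E c al be).
Proof. by move=> E_sym v w; rewrite /bichromatic /= E_sym setUC. Qed.

Lemma proper_ecoloring_inj (T : finType) (E : rel T) c v w1 w2 :
  proper_ecoloring E c -> E v w1 -> E v w2 -> c [set v; w1] = c [set v; w2] -> w1 = w2.
Proof.
move=> c_proper Ew1 Ew2 e; case: (eqVneq w1 w2) => // ne.
by move: (c_proper _ _ _ Ew1 Ew2 ne); rewrite e eqxx.
Qed.

Lemma mem_pair_alternating (al be x : nat) k : x \in [:: al; be] ->
  x = (if odd k then be else al) \/ x = (if odd k.+1 then be else al).
Proof. by rewrite !inE /=; case: (odd k) => /orP[] /eqP ->; auto. Qed.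

Section CriticalPath.

Variables (T : finType) (E : rel T) (c : ecoloring T) (al be : nat) (a b : T) (q : seq T).
Hypotheses (E_sym : symmetric E) (c_proper : proper_ecoloring E c)
  (Pq : critical_path E c al be a b q).

Local Notation p := (nth a (a :: q)).
Local Notation n := (size q).

Lemma critical_path_connect : connect (bichromatic E c al be) a b.
Proof.
case: Pq => [[_ _ Eq <-] [Cq _ _ _ _]]; apply/connectP; exists q => //.
apply/(pathP a) => k lt_kn; rewrite /bichromatic /= (pathP a Eq k lt_kn) Cq //.
by case: (odd k); rewrite !inE eqxx ?orbT.
Qed.

Lemma critical_path_size_gt0 : 0 < n.
Proof. by case: Pq => [[]]; case: q. Qed.

Lemma critical_path_last : p n = b.
Proof. by case: Pq => [[_ _ _ <-] _]; rewrite (nth_last a (a :: q)). Qed.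

Lemma critical_path_uniq : uniq (a :: q).
Proof. by case: Pq => [[]]. Qed.

Lemma critical_path_step k : k < n ->
  E (p k) (p k.+1) /\ c [set p k; p k.+1] = if odd k then be else al.
Proof. by case: Pq => [[_ _ Eq _] [Cq _ _ _ _]] lt_kn /=; rewrite (pathP a Eq k lt_kn) Cq. Qed.

Lemma critical_path_nbr k w : k <= n -> bichromatic E c al be (p k) w ->
  (0 < k /\ w = p k.-1) \/ (k < n /\ w = p k.+1).
Proof.
have n_gt0 := critical_path_size_gt0.
case: (Pq) => [_ [_ _ _ max_a max_b]] le_kn /andP[Ew Cw].
case: k le_kn Ew Cw => [|l] le_ln Ew Cw.
  by right; split; rewrite // (max_a w Ew Cw); case: (q) n_gt0.
case: (eqVneq l.+1 n) => [e_ln | ne_ln].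
  rewrite e_ln critical_path_last in Ew Cw.
  by left; split; rewrite // (max_b w Ew Cw) -e_ln.
have lt_ln : l.+1 < n by rewrite ltn_neqAle ne_ln.
have [E1 C1] := critical_path_step (ltnW lt_ln).
have [E2 C2] := critical_path_step lt_ln.
case: (mem_pair_alternating l Cw) => C; [left | right]; split => //.
  apply: (proper_ecoloring_inj c_proper Ew); first by rewrite E_sym.
  by rewrite C setUC C1.
by apply: (proper_ecoloring_inj c_proper Ew E2); rewrite C C2.
Qed.

Lemma mem_prefix_nth m r : m <= n -> (p m \in take r (a :: q)) = (m < r).
Proof.
move=> le_mn; have uniq_aq := critical_path_uniq.
by rewrite in_take ?index_uniq ?mem_nth.
Qed.

Lemma critical_path_closed v w :
  v \in a :: q -> bichromatic E c al be v w -> w \in a :: q.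
Proof.
move=> vP; have le_vn : index v (a :: q) <= n by rewrite -ltnS index_mem.
rewrite -(nth_index a vP) => /(critical_path_nbr le_vn) [[_ ->] | [lt_vn ->]].
  by rewrite mem_nth //= ltnS (leq_trans (leq_pred _)).
by rewrite mem_nth.
Qed.

Lemma critical_path_interior v x : v \in a :: q -> v != a -> v != b ->
  x \in [:: al; be] -> exists2 w, E v w & c [set v; w] = x.
Proof.
move=> vP ne_va ne_vb Cx.
have le_vn : index v (a :: q) <= n by rewrite -ltnS index_mem.
rewrite -(nth_index a vP) in ne_va ne_vb *.
case: (index v (a :: q)) le_vn ne_va ne_vb => [|l] le_ln; first by rewrite /= eqxx.
move=> _ ne_lb; have lt_ln : l.+1 < n.
  by rewrite ltn_neqAle le_ln andbT; apply: contraNneq ne_lb => ->; rewrite critical_path_last.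
have [E1 C1] := critical_path_step (ltnW lt_ln).
have [E2 C2] := critical_path_step lt_ln.
case: (mem_pair_alternating l Cx) => ->; last by exists (p l.+2).
by exists (p l); rewrite 1?E_sym // setUC.
Qed.

Lemma critical_path_edge_index v w : v \in a :: q -> bichromatic E c al be v w ->
  exists2 r, r < n & [set p r; p r.+1] = [set v; w].
Proof.
move=> vP; have le_vn : index v (a :: q) <= n by rewrite -ltnS index_mem.
rewrite -(nth_index a vP) => /(critical_path_nbr le_vn) [[k_gt0 ->] | [lt_kn ->]].
  exists (index v (a :: q)).-1; first by rewrite prednK.
  by rewrite prednK // setUC.
by exists (index v (a :: q)).
Qed.

Lemma critical_path_prefix_closed r v w : r < n -> v \in take r.+1 (a :: q) ->
  bichromatic E c al be v w -> [set v; w] != [set p r; p r.+1] ->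
  w \in take r.+1 (a :: q).
Proof.
move=> lt_rn vA; have vP := mem_take vA; have le_vr := index_ltn vA.
have le_vn : index v (a :: q) <= n by rewrite -ltnS index_mem.
rewrite -(nth_index a vP) => /(critical_path_nbr le_vn) [[_ ->] | [lt_vn ->]] ne_r.
  by rewrite mem_prefix_nth ?(leq_trans (leq_pred _)) // (leq_ltn_trans (leq_pred _)).
rewrite mem_prefix_nth // ltnS ltn_neqAle -ltnS le_vr andbT.
by apply: contraNneq ne_r => ->.
Qed.

Lemma critical_path_cut (c' : ecoloring T) u i j :
  u \in a :: q -> bichromatic E c al be u i -> j \notin a :: q ->
  c' [set u; i] \notin [:: al; be] ->
  (forall F, F != [set u; i] -> F != [set u; j] -> c' F = c F) ->
  ~~ connect (bichromatic E c' al be) a b.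
Proof.
move=> uP bic_ui jP Cui' c'_eq.
have [r lt_rn e_r] := critical_path_edge_index uP bic_ui.
set A := take r.+1 (a :: q).
(* A is the part of P up to the edge ui; the vertices off P are reachable only
   through uj, hence from the side of u. *)
pose S := [pred v | (v \in A) || (u \in A) && (v \notin a :: q)].
have uA_of v : v \in [set u; j] -> v \in S -> u \in A.
  rewrite in_set2 => /orP[] /eqP -> /orP[// | /andP[//]] jA.
  by rewrite (mem_take jA) in jP.
have S_closed : closed (bichromatic E c' al be) S.
  apply: intro_closed; first exact/sym_connect_sym/bichromatic_sym.
  move=> v w /andP[Evw Cvw] Sv.
  have ne_ui : [set v; w] != [set u; i] by apply: contraNneq Cui' => <-.
  have [e_uj | ne_uj] := eqVneq [set v; w] [set u; j].
    have uA : u \in A by apply: uA_of Sv; rewrite -e_uj set21.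
    have : w \in [set u; j] by rewrite -e_uj set22.
    by rewrite in_set2 => /orP[] /eqP ->; rewrite inE uA ?jP ?orbT.
  have bic_vw : bichromatic E c al be v w by rewrite /bichromatic /= Evw -c'_eq.
  case/orP: Sv => [vA | /andP[uA vP]]; apply/orP.
    by left; apply: critical_path_prefix_closed vA bic_vw _; rewrite // e_r.
  right; rewrite uA; apply: contra vP => wP.
  by apply: (critical_path_closed wP); rewrite bichromatic_sym.
have Sa : a \in S by apply/orP; left; rewrite /A /= mem_head.
have Sb : b \notin S.
  rewrite -critical_path_last; apply/norP; split.
    by rewrite /A mem_prefix_nth // ltnNge lt_rn.
  by rewrite negb_and negbK mem_nth ?orbT.
by apply: contra Sb => /(closed_connect S_closed) <-.
Qed.

End CriticalPath.

Lemma recolor_disconnects_critical_ends (T : finType) (E : rel T) (c c' : ecoloring T)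
    (u i j a b : T) (al be : nat) (q : seq T) :
  symmetric E -> irreflexive E -> proper_ecoloring E c -> proper_ecoloring E c' ->
  c' [set u; i] = c [set u; j] -> c' [set u; j] = c [set u; i] ->
  (forall F, F != [set u; i] -> F != [set u; j] -> c' F = c F) ->
  E u i -> E u j -> i != j -> c [set u; i] \in [:: al; be] ->
  i != a -> i != b -> j != a -> j != b ->
  critical_path E c al be a b q -> u \in a :: q ->
  ~~ connect (bichromatic E c' al be) a b.
Proof.
move=> E_sym E_irr c_proper c'_proper c'_ui c'_uj c'_eq Eui Euj ne_ij Cui.
move=> ne_ia ne_ib ne_ja ne_jb Pq uP.
have ne_of v w : E v w -> v != w by apply: contraTneq => ->; rewrite E_irr.
have [Eiu Eju] : E i u /\ E j u by rewrite !(E_sym _ u).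
have [ne_iu ne_ju] := (ne_of _ _ Eiu, ne_of _ _ Eju).
have clash v w : v != u -> E v u -> E v w -> w != u -> c' [set v; u] != c [set v; w].
  move=> ne_vu Evu Evw ne_wu.
  have ne_uset x : [set v; w] != [set u; x].
    apply: contraNneq ne_wu => e; have : u \in [set v; w] by rewrite e set21.
    by rewrite in_set2 eq_sym (negbTE ne_vu) /= eq_sym.
  by rewrite -c'_eq ?ne_uset //; apply: c'_proper; rewrite // eq_sym.
have bic_ui : bichromatic E c al be u i by apply/andP.
have iP : i \in a :: q := critical_path_closed E_sym c_proper Pq uP bic_ui.
have Cuj : c [set u; j] \notin [:: al; be].
  apply/negP => Cuj.
  have [w Eiw Ciw] := critical_path_interior E_sym Pq iP ne_ia ne_ib Cuj.
  have ne_wu : w != u.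
    by apply: contraTneq (c_proper _ _ _ Eui Euj ne_ij) => e; rewrite -Ciw e setUC eqxx.
  by move: (clash i w ne_iu Eiu Eiw ne_wu); rewrite setUC c'_ui Ciw eqxx.
have jP : j \notin a :: q.
  apply/negP => jP.
  have [w Ejw Cjw] := critical_path_interior E_sym Pq jP ne_ja ne_jb Cui.
  have ne_wu : w != u by apply: contraNneq Cuj => e; rewrite setUC -e Cjw.
  by move: (clash j w ne_ju Eju Ejw ne_wu); rewrite setUC c'_uj Cjw eqxx.
have Cui' : c' [set u; i] \notin [:: al; be] by rewrite c'_ui.
exact: (critical_path_cut E_sym c_proper Pq uP bic_ui jP Cui' c'_eq).
Qed.

Theorem lemma2 (T : finType) (adj : rel T) (x y : T) (c : ecoloring T)
    (u i j a b : T) (al be : nat) :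
  simple_graph adj ->
  adj x y ->
  acyclic_ecoloring (del_edge adj x y) c ->
  del_edge adj x y u i -> del_edge adj x y u j -> i != j ->
  adj a b ->
  al != be ->
  (c [set u; i] \in [:: al; be]) || (c [set u; j] \in [:: al; be]) ->
  [&& i != a, i != b, j != a & j != b] ->
  (exists q, critical_path (del_edge adj x y) c al be a b q /\ u \in a :: q) ->
  proper_ecoloring (del_edge adj x y) (swap_colors c u i j) ->
  ~ exists q, critical_path (del_edge adj x y) (swap_colors c u i j) al be a b q.
Proof.
move=> [adj_sym adj_irr] _ [c_proper _] Eui Euj ne_ij _ _ Cuij ne_ends [q [Pq uP]] c'_proper.
move=> [q' /critical_path_connect]; apply/negP.
set E := del_edge adj x y in Eui Euj c_proper c'_proper Pq *.
set c' := swap_colors c u i j in c'_proper *.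
have E_sym : symmetric E by move=> v w; rewrite /E /del_edge adj_sym setUC.
have E_irr : irreflexive E by move=> v; rewrite /E /del_edge adj_irr.
have ne_uj : u != j by apply: contraTneq Euj => ->; rewrite E_irr.
have ne_uji : [set u; j] != [set u; i].
  have : j \notin [set u; i] by rewrite in_set2 negb_or eq_sym ne_uj eq_sym ne_ij.
  by apply: contraNneq => <-; rewrite set22.
have c'_ui : c' [set u; i] = c [set u; j] by rewrite /c' /swap_colors eqxx.
have c'_uj : c' [set u; j] = c [set u; i].
  by rewrite /c' /swap_colors (negbTE ne_uji) eqxx.
have c'_eq F : F != [set u; i] -> F != [set u; j] -> c' F = c F.
  by move=> ne_i ne_j; rewrite /c' /swap_colors (negbTE ne_i) (negbTE ne_j).
have [ne_ia ne_ib ne_ja ne_jb] := and4P ne_ends.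
case/orP: Cuij => [Cui | Cuj].
  exact: (recolor_disconnects_critical_ends E_sym E_irr c_proper c'_proper
           c'_ui c'_uj c'_eq Eui Euj ne_ij Cui ne_ia ne_ib ne_ja ne_jb Pq uP).
have ne_ji : j != i by rewrite eq_sym.
exact: (recolor_disconnects_critical_ends E_sym E_irr c_proper c'_proper
         c'_uj c'_ui (fun F ne_j ne_i => c'_eq F ne_i ne_j) Euj Eui ne_ji Cuj
         ne_ja ne_jb ne_ia ne_ib Pq uP).
Qed.
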